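(* Let $U$ be a scale aversion regular utility function and $\alpha$ the associated utility-based acceptability index. Then for all $X,Y\in L^\infty$: (1) if $X\le Y$ a.s. then $\alpha(X)\le\alpha(Y)$; (2) $X\ge0$ a.s. if and only if $\alpha(X)=\infty$; (3) for every $\lambda\in[0,1]$, $\alpha(\lambda X+(1-\lambda)Y)\ge\alpha(X)\wedge\alpha(Y)$; (4) if $X$ and $Y$ have the same law then $\alpha(X)=\alpha(Y)$; (5) if $\mathbb E[X]<0$ then $\alpha(X)=0$, and if $\mathbb E[X]>0$ then $\alpha(X)>0$; (6) (Fatou property) if $x\in[0,\infty]$, $X_n\in L^\infty$ with $\alpha(X_n)\ge x$ for all $n\in\mathbb N$ and $X_n\to X$ almost surely, then $\alpha(X)\ge x$; (7) if $\mathbb E[V(X)]\le\mathbb E[V(Y)]$ for every increasing concave $V\colon\mathbb R\to\mathbb R$, then $\alpha(X)\le\alpha(Y)$; (8) (inverse positive homogeneity) for every $\lambda>0$, $\alpha(\lambda X)=\lambda^{-1}\alpha(X)$ (with $\lambda^{-1}\cdot\infty=\infty$).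
   Context: Let $(\Omega,\mathcal F,\mathbb P)$ be a probability space, $L^0$ the set of all real-valued random variables and $L^\infty$ the set of essentially bounded ones. A utility function is a function $U\in C^2(\mathbb R)$ which is concave, strictly increasing and bounded from above. For $\gamma>0$ define $\mu_\gamma\colon L^0\to(-\infty,+\infty]$ by $\mu_\gamma(X):=-\tfrac1\gamma U^{-1}(\mathbb E[U(\gamma X)])$, with the convention $U^{-1}(-\infty):=-\infty$. $U$ is called scale aversion regular if $\mu_{\gamma_1}(X)\le\mu_{\gamma_2}(X)$ for all $X\in L^\infty$ and all $0<\gamma_1\le\gamma_2<\infty$. For scale aversion regular $U$, the utility-based acceptability index $\alpha\colon L^0\to[0,+\infty]$ is $\alpha(X):=\sup\{\gamma>0:\mu_\gamma(X)\le0\}$, with $\sup\emptyset:=0$. *)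

From HB Require Import structures.
From mathcomp Require Import all_boot all_order all_algebra.
From mathcomp Require Import all_classical all_reals all_analysis.
Set Implicit Arguments. Unset Strict Implicit. Unset Printing Implicit Defensive.
Import Order.TTheory GRing.Theory Num.Theory.
Import numFieldNormedType.Exports.
Local Open Scope classical_set_scope.
Local Open Scope ring_scope.

Section Defs.
Context {R : realType}.

Definition C2 (U : R -> R) : Prop :=
  (forall x, derivable U x 1) /\
  (forall x, derivable (derive1 U) x 1) /\
  continuous (derive1 (derive1 U)).

Definition concave_fun (U : R -> R) : Prop :=
  forall (x y t : R), 0 <= t -> t <= 1 ->
    t * U x + (1 - t) * U y <= U (t * x + (1 - t) * y).

Definition strict_incr (U : R -> R) : Prop :=
  forall x y : R, x < y -> U x < U y.

Definition nondecr (V : R -> R) : Prop :=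
  forall x y : R, x <= y -> V x <= V y.

Definition bounded_above (U : R -> R) : Prop := exists M : R, forall x, U x <= M.

Definition utility_function (U : R -> R) : Prop :=
  [/\ C2 U, concave_fun U, strict_incr U & bounded_above U].

(* On finite values it
   picks the (unique, U being strictly increasing) preimage; the default
   value 0 / +oo is never used for the arguments occurring below. *)
Definition Uinv (U : R -> R) (e : \bar R) : \bar R :=
  match e with
  | -oo%E => -oo%E
  | r%:E => (xget 0 [set x | U x = r])%:E
  | +oo%E => +oo%E
  end.
End Defs.

Section Prob.
Context {d : measure_display} {T : measurableType d} {R : realType}.
Variable P : probability T R.

Definition Linfty (X : T -> R) : Prop :=
  measurable_fun setT X /\ exists M : R, {ae P, forall w, `|X w| <= M}.

Definition mu (U : R -> R) (g : R) (X : T -> R) : \bar R :=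
  (- ((g^-1)%:E * Uinv U ('E_P[fun w => U (g * X w)%R])))%E.

Definition scale_aversion_regular (U : R -> R) : Prop :=
  forall X : T -> R, Linfty X ->
  forall g1 g2 : R, 0 < g1 -> g1 <= g2 -> (mu U g1 X <= mu U g2 X)%E.

Definition alpha (U : R -> R) (X : T -> R) : \bar R :=
  Order.max 0%E (ereal_sup [set (g%:E) | g in [set g : R | 0 < g /\ (mu U g X <= 0)%E]]).
End Prob.

(* Write A(X) = {g > 0 | mu_g(X) <= 0}, so that alpha(X) = sup A(X); scale aversion
   regularity makes A(X) an initial segment of (0, +oo).  For bounded X, E[U(gX)] is a
   certainty equivalent U(c), hence g is in A(X) iff E[U(gX)] >= U(0).  Monotonicity,
   law invariance and consistency with second order dominance are then inherited from
   g |-> E[U(gX)], quasi-concavity from the concavity of U, and the Fatou property from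
   Fatou's lemma for the nonnegative B - U(gX_n), B an upper bound of U.
   Concavity puts U below its tangent U(0) + U'(0) y with U'(0) > 0, so
   E[U(gX)] <= U(0) + U'(0) g E[X] < U(0) for every g when E[X] < 0; and if
   P(X < -c) = p > 0 then E[U(gX)] <= B + (U(-gc) - B) p < U(0) for g large, so
   alpha(X) is finite.  When E[X] > 0, differentiability at 0 gives
   U(gX) >= U(0) + U'(0) g X - eps g |X| uniformly on the essential range of X once g
   is small, whence E[U(gX)] > U(0) and alpha(X) > 0. *)

From HB Require Import structures.
From mathcomp Require Import all_boot all_order all_algebra.
From mathcomp Require Import all_classical all_reals all_analysis.
From mathcomp Require Import measurable_realfun.
From mathcomp Require Import ring lra.
Import Order.TTheory GRing.Theory Num.Theory.
Import numFieldNormedType.Exports.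
Local Open Scope classical_set_scope.
Local Open Scope ring_scope.

Section tangent.
Context {R : realType} {f : R -> R} {x : R}.
Hypothesis df : derivable f x 1.

Lemma derivable1_approx {e : R} : 0 < e -> exists2 d : R, 0 < d &
  forall t, `|t| < d -> `|f (x + t) - f x - derive1 f x * t| <= e * `|t|.
Proof.
move=> e0; have /cvg_ex[/= a Da] := df.
have -> : derive1 f x = a by rewrite derive1E; exact: cvg_lim Da.
move/cvgrPdist_lt : Da => /(_ e e0)/nbhs_ballP[d d0 near_d].
exists d => // t td; have [->|t0] := eqVneq t 0.
  by rewrite addr0 subrr mulr0 subr0 normr0 mulr0.
have tp : 0 < `|t| by rewrite normr_gt0.
have := near_d t; rewrite /ball /= sub0r normrN => /(_ td t0).
rewrite [t%:A]mulr1 [t + x]addrC -(ltr_pM2r tp) -normrM => /ltW.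
suff -> : (a - t^-1 *: (f (x + t) - f x)) * t = - (f (x + t) - f x - a * t).
  by rewrite normrN.
by rewrite /GRing.scale /=; field.
Qed.

Hypothesis concave_f : concave_fun f.

Lemma concave_le_tangent y : f y <= f x + derive1 f x * (y - x).
Proof.
apply/ler_addgt0Pr => e e0.
have [->|yx] := eqVneq y x; first by rewrite subrr mulr0 addr0 lerDl ltW.
have r0 : 0 < `|y - x| by rewrite normr_gt0 subr_eq0.
have [d d0 approx] := derivable1_approx (divr_gt0 e0 r0).
pose t := Num.min 1 (d / (2 * `|y - x|)).
have t0 : 0 < t by rewrite lt_min ltr01 divr_gt0 // mulr_gt0.
have t1 : t <= 1 by rewrite ge_min lexx.
have td : `|t * (y - x)| < d.
  have : t * `|y - x| <= d / (2 * `|y - x|) * `|y - x|.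
    by rewrite ler_pM2r // ge_min lexx orbT.
  have -> : d / (2 * `|y - x|) * `|y - x| = d / 2 by field; rewrite gt_eqF.
  by rewrite normrM (gtr0_norm t0); lra.
have chord : t * (f y - f x) <= f (x + t * (y - x)) - f x.
  have := concave_f y x t (ltW t0) t1.
  have -> : t * y + (1 - t) * x = x + t * (y - x) by ring.
  lra.
have upper : f (x + t * (y - x)) - f x - derive1 f x * (t * (y - x)) <= t * e.
  have := approx _ td; rewrite ler_norml normrM (gtr0_norm t0) => /andP[_].
  by rewrite [X in _ <= X](_ : _ = t * e) //; field; rewrite gt_eqF.
by rewrite -subr_le0 -(pmulr_rle0 _ t0); lra.
Qed.

End tangent.

Section utility.
Context {R : realType} {U : R -> R} (hU : utility_function U).

Lemma lt_U : {mono U : x y / x < y}.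
Proof.
case: hU => _ _ U_incr _ x y; apply/idP/idP; last exact: U_incr.
by apply: contraTT; rewrite -!leNgt le_eqVlt => /predU1P[->//|/U_incr/ltW].
Qed.

Lemma le_U : {mono U : x y / x <= y}.
Proof. by move=> x y; rewrite !leNgt lt_U. Qed.

Lemma U_inj : injective U.
Proof. by move=> x y Uxy; apply/le_anti/andP; split; rewrite -le_U Uxy. Qed.

Lemma U_concave : concave_fun U.
Proof. by case: hU. Qed.

Lemma U_bounded_above : exists B, forall x, U x <= B.
Proof. by case: hU. Qed.

Lemma U_derivable x : derivable U x 1.
Proof. by case: hU => -[]. Qed.

Lemma U_continuous : continuous U.
Proof. by move=> x; exact/differentiable_continuous/derivable1_diffP/U_derivable. Qed.

Lemma measurable_U : measurable_fun setT U.
Proof. by apply: nondecreasing_measurable => // x y; rewrite le_U. Qed.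

Lemma UinvU c : Uinv U (U c)%:E = c%:E.
Proof.
congr EFin; apply: U_inj.
exact: (xgetPex 0 (ex_intro (fun x => U x = U c) c erefl)).
Qed.

Lemma U_onto_itv {a b v : R} : a <= b -> U a <= v <= U b -> exists c, U c = v.
Proof.
move=> ab /andP[Uav vUb]; have [c _ <-] : exists2 c, c \in `[a, b] & U c = v.
  apply: IVT => //; first exact/continuous_subspaceT/U_continuous.
  by rewrite ge_min le_max Uav vUb orbT.
by exists c.
Qed.

Lemma U_le_tangent0 y : U y <= U 0 + derive1 U 0 * y.
Proof. by have := concave_le_tangent (U_derivable 0) U_concave y; rewrite subr0. Qed.

Lemma derive1_U0_gt0 : 0 < derive1 U 0.
Proof.
have U01 : U 0 < U 1 by rewrite lt_U.
by have := U_le_tangent0 1; rewrite mulr1; lra.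
Qed.

Lemma U_unbounded_below K : exists2 t, 0 < t & U (- t) < K.
Proof.
have a0 := derive1_U0_gt0; pose t := (`|U 0 - K| + 1) / derive1 U 0.
exists t; first by rewrite divr_gt0 // ltr_wpDl.
apply: (le_lt_trans (U_le_tangent0 _)).
rewrite mulrN /t mulrCA divff ?gt_eqF // mulr1.
have := ler_norm (U 0 - K); lra.
Qed.

End utility.

Section probability.
Context {d : measure_display} {T : measurableType d} {R : realType}
  {P : probability T R}.

Lemma Linfty_ae_bound {X : T -> R} : Linfty P X ->
  exists2 M, 0 < M & {ae P, forall w, `|X w| <= M}.
Proof.
move=> [_ [M XM]]; exists (Num.max M 1); first by rewrite lt_max ltr01 orbT.
by apply: filterS XM => w XwM; rewrite le_max XwM.
Qed.

Lemma ae_bounded_Lfun1 {f : T -> R} (M : R) : measurable_fun setT f ->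
  {ae P, forall w, `|f w| <= M} -> f \in Lfun P 1.
Proof.
move=> mf fM; apply/Lfun1_integrable/integrableP; split; first exact/measurable_EFinP.
apply: (@le_lt_trans _ _ ((Num.max M 0)%:E * P setT)%E).
  apply: integral_le_bound => //.
  - by apply: measurableT_comp => //; exact/measurable_EFinP.
  - by rewrite lee_fin le_max lexx orbT.
  by apply: filterS fM => w fwM _ /=; rewrite lee_fin le_max fwM.
by rewrite probability_setT mule1 ltry.
Qed.

Lemma Linfty_Lfun1 {X : T -> R} : Linfty P X -> X \in Lfun P 1.
Proof. by move=> [mX [M XM]]; exact: ae_bounded_Lfun1 M mX XM. Qed.

Lemma Lfun1_indic (A : set T) : measurable A -> (\1_A : T -> R) \in Lfun P 1.
Proof.
move=> mA; apply: (ae_bounded_Lfun1 1); first exact: measurable_indic.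
by apply: aeW => w; rewrite indicE; case: (_ \in _); rewrite ?normr1 ?normr0.
Qed.

Lemma Linfty_lin {X Y : T -> R} (a b : R) : Linfty P X -> Linfty P Y ->
  Linfty P (fun w => a * X w + b * Y w).
Proof.
move=> [mX [MX XM]] [mY [MY YM]]; split.
  by apply: measurable_funD; apply: measurable_funM.
exists (`|a| * MX + `|b| * MY); apply: filterS2 XM YM => w XwM YwM.
rewrite (le_trans (ler_normD _ _)) // !normrM.
by rewrite lerD // ler_wpM2l.
Qed.

Lemma LinftyZ {X : T -> R} (a : R) : Linfty P X -> Linfty P (fun w => a * X w).
Proof.
move=> [mX [M XM]]; split; first exact: measurable_funM.
by exists (`|a| * M); apply: filterS XM => w XwM; rewrite normrM ler_wpM2l.
Qed.

Lemma ae_le_expectation (X Y : T -> R) : X \in Lfun P 1 -> Y \in Lfun P 1 ->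
  {ae P, forall w, X w <= Y w} -> ('E_P[X] <= 'E_P[Y])%E.
Proof.
move=> /Lfun1_integrable iX /Lfun1_integrable iY [N [mN PN XYN]].
have /= := negligible_integral mN measurableT iX PN.
have /= := negligible_integral mN measurableT iY PN.
rewrite unlock => -> ->.
have mTN : measurable (setT `\` N) by exact: measurableD.
apply: le_integral => //; [exact: integrableS iX|exact: integrableS iY|].
move=> w; rewrite inE => -[_ Nw]; rewrite lee_fin.
by apply: contrapT => XYw; apply: Nw; apply: XYN.
Qed.

Let affineE (X : T -> R) (c k : R) : (fun w => c + k * X w) = cst c \+ k \o* X.
Proof. by apply/funext => w /=; rewrite mulrC. Qed.

Lemma Lfun1_affine {X : T -> R} (c k : R) : X \in Lfun P 1 ->
  (fun w => c + k * X w) \in Lfun P 1.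
Proof. by move=> lX; rewrite affineE rpredD ?Lfun_cst ?Lfun_scale. Qed.

Lemma expectation_affine {X : T -> R} (c k : R) : X \in Lfun P 1 ->
  ('E_P[fun w => (c + k * X w)%R] = c%:E + k%:E * 'E_P[X])%E.
Proof.
move=> lX; rewrite affineE expectationD ?Lfun_cst ?Lfun_scale //.
by rewrite expectation_cst expectationZl.
Qed.

Let lin_combE (X Y : T -> R) (a b : R) :
  (fun w => a * X w + b * Y w) = a \o* X \+ b \o* Y.
Proof. by apply/funext => w /=; rewrite mulrC [b * _]mulrC. Qed.

Lemma Lfun1_lin {X Y : T -> R} (a b : R) : X \in Lfun P 1 -> Y \in Lfun P 1 ->
  (fun w => a * X w + b * Y w) \in Lfun P 1.
Proof. by move=> lX lY; rewrite lin_combE rpredD ?Lfun_scale. Qed.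

Lemma expectation_lin {X Y : T -> R} (a b : R) : X \in Lfun P 1 -> Y \in Lfun P 1 ->
  ('E_P[fun w => (a * X w + b * Y w)%R] = a%:E * 'E_P[X] + b%:E * 'E_P[Y])%E.
Proof.
by move=> lX lY; rewrite lin_combE expectationD ?Lfun_scale // !expectationZl.
Qed.

Lemma expectation_law {X Y : T -> R} (f : R -> R) :
  measurable_fun setT X -> measurable_fun setT Y -> measurable_fun setT f ->
  (f \o X) \in Lfun P 1 -> (f \o Y) \in Lfun P 1 ->
  (forall B : set R, measurable B -> P (X @^-1` B) = P (Y @^-1` B)) ->
  ('E_P[f \o X] = 'E_P[f \o Y])%E.
Proof.
move=> mX mY mf /Lfun1_integrable iX /Lfun1_integrable iY XY.
have mEf : measurable_fun setT (EFin \o f) by exact/measurable_EFinP.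
have := integral_pushforward mX (mu := P) (D := setT) mEf.
rewrite preimage_setT => /(_ iX measurableT).
have := integral_pushforward mY (mu := P) (D := setT) mEf.
rewrite preimage_setT => /(_ iY measurableT).
rewrite unlock => <- <-.
by apply: eq_measure_integral => A mA _; exact: XY.
Qed.

Lemma measurable_fun_lt {X : T -> R} (c : R) : measurable_fun setT X ->
  measurable [set w | X w < c].
Proof.
move=> mX; rewrite (_ : [set w | _] = X @^-1` `]-oo, c[); last first.
  by apply/seteqP; split => w /=; rewrite in_itv.
by rewrite -[X in measurable X]setTI; exact: mX.
Qed.

Lemma not_ae_ge0 {X : T -> R} : measurable_fun setT X ->
  ~ {ae P, forall w, 0 <= X w} ->
  exists2 c : R, 0 < c & (0 < P [set w | (X w < - c)%R])%E.
Proof.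
move=> mX notX; apply: contrapT => none; apply: notX.
have : {ae P, forall w (n : nat), ~ X w < - n.+1%:R^-1}.
  apply: ae_foralln => n; exists [set w | X w < - n.+1%:R^-1].
  split; first exact: measurable_fun_lt.
  - apply/eqP; rewrite eq_le measure_ge0 andbT leNgt; apply/negP => Pn.
    by apply: none; exists n.+1%:R^-1; rewrite ?invr_gt0.
  - by move=> w /= /contrapT.
apply: filterS => w notlt; rewrite leNgt; apply/negP => Xw0.
apply: (notlt (Num.truncn (- X w)^-1)).
rewrite ltrNr -[ltRHS]invrK ltf_pV2 ?posrE ?ltr0Sn ?invr_gt0 ?oppr_gt0 //.
exact: truncnS_gt.
Qed.

End probability.

Section expected_utility.
Context {d : measure_display} {T : measurableType d} {R : realType}
  {P : probability T R} {U : R -> R} (hU : utility_function U).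

Lemma U_Linfty_Lfun1 {X : T -> R} : Linfty P X -> (fun w => U (X w)) \in Lfun P 1.
Proof.
move=> hX; have [M _ XM] := Linfty_ae_bound hX.
apply: (ae_bounded_Lfun1 (`|U (- M)| + `|U M|)).
  exact: measurableT_comp (measurable_U hU) hX.1.
apply: filterS XM => w; rewrite ler_norml => /andP[MXw XwM].
have lo : U (- M) <= U (X w) by rewrite (le_U hU).
have hi : U (X w) <= U M by rewrite (le_U hU).
have := ler_norm (U M); have := ler_norm (- U (- M)); rewrite normrN ler_norml.
by have := normr_ge0 (U M); have := normr_ge0 (U (- M)); lra.
Qed.

Lemma U_scale_Lfun1 {X : T -> R} (g : R) :
  Linfty P X -> (fun w => U (g * X w)) \in Lfun P 1.
Proof. by move=> hX; exact (U_Linfty_Lfun1 (LinftyZ g hX)). Qed.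

Lemma U_certainty_equivalent {X : T -> R} : Linfty P X ->
  exists c, 'E_P[fun w => U (X w)]%E = (U c)%:E.
Proof.
move=> hX; have [M M0 XM] := Linfty_ae_bound hX.
have lo : ((U (- M))%:E <= 'E_P[fun w => U (X w)])%E.
  rewrite -[X in (X <= _)%E](expectation_cst P).
  apply: ae_le_expectation; [exact: Lfun_cst|exact: U_Linfty_Lfun1|].
  by apply: filterS XM => w /=; rewrite (le_U hU) ler_norml => /andP[].
have hi : ('E_P[fun w => U (X w)] <= (U M)%:E)%E.
  rewrite -[X in (_ <= X)%E](expectation_cst P).
  apply: ae_le_expectation; [exact: U_Linfty_Lfun1|exact: Lfun_cst|].
  by apply: filterS XM => w /=; rewrite (le_U hU) ler_norml => /andP[].
move: lo hi; case: ('E_P[_])%E => [r| |] //; rewrite !lee_fin => lo hi.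
have MM : - M <= M by lra.
have [c Uc] := U_onto_itv hU MM (introT andP (conj lo hi)).
by exists c; rewrite Uc.
Qed.

Lemma mu_le0E {X : T -> R} {g : R} : Linfty P X -> 0 < g ->
  (mu P U g X <= 0)%E <-> ((U 0)%:E <= 'E_P[fun w => U (g * X w)])%E.
Proof.
move=> hX g0; have [c /= Ec] := U_certainty_equivalent (LinftyZ g hX).
rewrite /mu Ec UinvU // -EFinM -EFinN !lee_fin oppr_le0 pmulr_rge0 ?invr_gt0 //.
by rewrite le_U.
Qed.

Lemma U_expectation_fatou (Xn : nat -> T -> R) X r :
  (forall n, Linfty P (Xn n)) -> Linfty P X ->
  {ae P, forall w, (fun n => Xn n w) @ \oo --> X w} ->
  (forall n, (r%:E <= 'E_P[fun w => U (Xn n w)])%E) ->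
  (r%:E <= 'E_P[fun w => U (X w)])%E.
Proof.
move=> hXn hX [N [mN PN XnX]] rXn; have [B UB] := U_bounded_above hU.
have regret Y : Linfty P Y ->
    (\int[P]_w (B - U (Y w))%:E = B%:E - 'E_P[fun w => U (Y w)])%E.
  move=> hY; have := expectation_affine B (-1) (U_Linfty_Lfun1 hY).
  rewrite unlock mulN1e => <-; apply: eq_integral => w _; by rewrite mulN1r.
have regret_ge0 x : (0 <= (B - U x)%:E)%E by rewrite lee_fin subr_ge0.
have mregret Y : Linfty P Y -> measurable_fun setT (fun w => (B - U (Y w))%:E).
  move=> hY; apply/measurable_EFinP/measurable_funB => //.
  exact: measurableT_comp (measurable_U hU) hY.1.
have mTN : measurable (setT `\` N) by exact: measurableD.
suff : (B%:E - 'E_P[fun w => U (X w)] <= (B - r)%:E)%E.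
  have [c ->] := U_certainty_equivalent hX; rewrite -EFinB !lee_fin; lra.
rewrite -regret // (ge0_negligible_integral mN _ (mregret _ hX) _ PN) //.
rewrite (eq_integral (fun w => limn_einf (fun n => (B - U (Xn n w))%:E))); last first.
  move=> w; rewrite inE => -[_ Nw]; symmetry; apply: (cvg_limn_einf_sup _).1.
  apply: cvg_EFin; first exact: nearW.
  apply: cvgB; first exact: cvg_cst.
  apply: continuous_cvg; first exact: U_continuous.
  by apply: contrapT => XnXw; apply: Nw; apply: XnX.
have := fatou P mTN (f := fun n w => (B - U (Xn n w))%:E)
  (fun n => measurable_funTS (mregret _ (hXn n))) (fun n w _ => regret_ge0 _).
move=> /le_trans; apply.
rewrite limn_einf_lim; apply: lime_le; first exact: is_cvg_einfs.
apply: nearW => n.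
apply: (@le_trans _ _ (\int[P]_(x in setT `\` N) (B - U (Xn n x))%:E)%E).
  by apply: ereal_inf_lbound; exists n => /=.
rewrite -(ge0_negligible_integral mN _ (mregret _ (hXn n)) _ PN) // regret //.
have [c Ec] := U_certainty_equivalent (hXn n).
by move: (rXn n); rewrite Ec -EFinB !lee_fin; lra.
Qed.

End expected_utility.

Lemma lte_fin_between {R : realType} (x y : \bar R) : x \is a fin_num ->
  (x < y)%E -> exists r : R, (x < r%:E < y)%E.
Proof.
move=> /fineK <-; case: y => [s| |] //; rewrite ?lte_fin => xy.
  by exists ((fine x + s) / 2); rewrite !lte_fin; apply/andP; split; lra.
by exists (fine x + 1); rewrite !lte_fin ltry andbT; lra.
Qed.

Section alpha.
Context {d : measure_display} {T : measurableType d} {R : realType}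
  {P : probability T R} {U : R -> R}.

Lemma alpha_ge0 (X : T -> R) : (0 <= alpha P U X)%E.
Proof. by rewrite /alpha le_max lexx. Qed.

Lemma mu_le0_le_alpha (X : T -> R) (g : R) : 0 < g -> (mu P U g X <= 0)%E ->
  (g%:E <= alpha P U X)%E.
Proof.
move=> g0 Xg; rewrite /alpha le_max; apply/orP; right.
by apply: ereal_sup_ubound; exists g.
Qed.

Lemma alpha_le (X Y : T -> R) :
  (forall g : R, 0 < g -> (mu P U g X <= 0)%E -> (mu P U g Y <= 0)%E) ->
  (alpha P U X <= alpha P U Y)%E.
Proof.
move=> XY; rewrite /alpha ge_max le_max lexx /= le_max; apply/orP; right.
by apply: ereal_sup_le => _ [g [g0 Xg] <-]; exists g => //; split => //; exact: XY.
Qed.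

Lemma alpha_eq0 (X : T -> R) : (forall g : R, 0 < g -> ~ (mu P U g X <= 0)%E) ->
  alpha P U X = 0%E.
Proof.
move=> noX; apply/le_anti; rewrite alpha_ge0 andbT /alpha ge_max lexx /=.
by apply: ge_ereal_sup => y [g [g0 Xg] _]; case: (noX g g0 Xg).
Qed.

Hypothesis sar : scale_aversion_regular P U.

Lemma lt_alpha_mu_le0 {X : T -> R} {g : R} : Linfty P X -> 0 < g ->
  (g%:E < alpha P U X)%E -> (mu P U g X <= 0)%E.
Proof.
move=> hX g0; rewrite /alpha lt_max ltNge lee_fin (ltW g0) /=.
move=> /ereal_sup_gt[_ [g' [g'0 Xg'] <-]]; rewrite lte_fin => gg'.
exact: le_trans (sar _ hX _ _ g0 (ltW gg')) Xg'.
Qed.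

Lemma alpha_ge (X : T -> R) (x : \bar R) : (0 <= x)%E ->
  (forall g : R, 0 < g -> (g%:E < x)%E -> (mu P U g X <= 0)%E) ->
  (x <= alpha P U X)%E.
Proof.
move=> x0 ltx; rewrite leNgt; apply/negP => alpha_x.
have : alpha P U X \is a fin_num.
  by rewrite ge0_fin_numE ?alpha_ge0 // (lt_le_trans alpha_x) ?leey.
move=> /lte_fin_between/(_ alpha_x)[g /andP[alpha_g gx]].
have g0 : 0 < g by rewrite -lte_fin (le_lt_trans (alpha_ge0 X)).
by move: alpha_g; rewrite ltNge mu_le0_le_alpha // ltx.
Qed.

End alpha.

Section properties.
Context {d : measure_display} {T : measurableType d} {R : realType}
  {P : probability T R} {U : R -> R} (hU : utility_function U)
  (sar : scale_aversion_regular P U).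

Lemma alpha_le_expected_utility {X Y : T -> R} : Linfty P X -> Linfty P Y ->
  (forall g : R, 0 < g ->
    ('E_P[fun w => U (g * X w)] <= 'E_P[fun w => U (g * Y w)])%E) ->
  (alpha P U X <= alpha P U Y)%E.
Proof.
move=> hX hY XY; apply: alpha_le => g g0.
by rewrite !(mu_le0E hU) // => /le_trans; apply; exact: XY.
Qed.

Lemma alpha_ae_le {X Y : T -> R} : Linfty P X -> Linfty P Y ->
  {ae P, forall w, X w <= Y w} -> (alpha P U X <= alpha P U Y)%E.
Proof.
move=> hX hY XY; apply: alpha_le_expected_utility => // g g0.
apply: ae_le_expectation; [exact: U_scale_Lfun1|exact: U_scale_Lfun1|].
by apply: filterS XY => w XYw; rewrite (le_U hU) ler_pM2l.
Qed.

Lemma alpha_ssd {X Y : T -> R} : Linfty P X -> Linfty P Y ->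
  (forall V : R -> R, nondecr V -> concave_fun V ->
    ('E_P[fun w => V (X w)] <= 'E_P[fun w => V (Y w)])%E) ->
  (alpha P U X <= alpha P U Y)%E.
Proof.
move=> hX hY XY; apply: alpha_le_expected_utility => // g g0.
apply: (XY (fun y => U (g * y))) => [x y xy|x y t t0 t1] /=.
  by rewrite (le_U hU) ler_pM2l.
have -> : g * (t * x + (1 - t) * y) = t * (g * x) + (1 - t) * (g * y) by ring.
exact: U_concave.
Qed.

Lemma alpha_law {X Y : T -> R} : Linfty P X -> Linfty P Y ->
  (forall B : set R, measurable B -> P (X @^-1` B) = P (Y @^-1` B)) ->
  alpha P U X = alpha P U Y.
Proof.
move=> hX hY XY.
have EU g : 'E_P[fun w => U (g * X w)]%E = 'E_P[fun w => U (g * Y w)]%E.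
  apply: (expectation_law (fun x => U (g * x))) hX.1 hY.1 _ _ _ XY.
  - exact: measurableT_comp (measurable_U hU) (measurable_funM _ _).
  - exact: U_scale_Lfun1.
  - exact: U_scale_Lfun1.
by apply/le_anti/andP; split; apply: alpha_le_expected_utility => // g _; rewrite EU.
Qed.

Lemma alpha_quasiconcave {X Y : T -> R} (l : R) : Linfty P X -> Linfty P Y ->
  0 <= l -> l <= 1 ->
  (Order.min (alpha P U X) (alpha P U Y)
    <= alpha P U (fun w => (l * X w + (1 - l) * Y w)%R))%E.
Proof.
move=> hX hY l0 l1; have hZ := Linfty_lin l (1 - l) hX hY.
apply: alpha_ge; first by rewrite le_min !alpha_ge0.
move=> g g0; rewrite lt_min => /andP[/(lt_alpha_mu_le0 sar hX g0) Xg].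
move=> /(lt_alpha_mu_le0 sar hY g0) Yg.
move: Xg Yg; rewrite !(mu_le0E hU) //.
have [cX /= EX] := U_certainty_equivalent hU (LinftyZ g hX).
have [cY /= EY] := U_certainty_equivalent hU (LinftyZ g hY).
rewrite EX EY !lee_fin => UcX UcY.
apply: (@le_trans _ _ (l * U cX + (1 - l) * U cY)%:E).
  by rewrite lee_fin; nra.
rewrite EFinD !EFinM -EX -EY -expectation_lin; try exact: U_scale_Lfun1.
apply: ae_le_expectation;
  [by apply: Lfun1_lin; exact: U_scale_Lfun1|exact: U_scale_Lfun1|].
apply: aeW => w.
have -> : g * (l * X w + (1 - l) * Y w) = l * (g * X w) + (1 - l) * (g * Y w).
  by ring.
exact: U_concave.
Qed.

Lemma Linfty_expectation {X : T -> R} : Linfty P X -> 'E_P[X]%E = (fine 'E_P[X])%:E.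
Proof. by move=> hX; rewrite fineK // expectation_fin_num // Linfty_Lfun1. Qed.

Lemma alpha_expectation_lt0 {X : T -> R} : Linfty P X -> ('E_P[X] < 0)%E ->
  alpha P U X = 0%E.
Proof.
move=> hX; rewrite (Linfty_expectation hX) lte_fin => EX0.
have a0 := derive1_U0_gt0 hU; apply: alpha_eq0 => g g0; rewrite (mu_le0E hU hX g0).
apply/negP; rewrite -ltNge; apply: (@le_lt_trans _ _ 
  'E_P[fun w => (U 0 + (derive1 U 0 * g) * X w)%R]%E).
  apply: ae_le_expectation; [exact: U_scale_Lfun1|exact/Lfun1_affine/Linfty_Lfun1|].
  by apply: aeW => w; rewrite -mulrA; exact: U_le_tangent0.
rewrite expectation_affine ?Linfty_Lfun1 // (Linfty_expectation hX) -EFinM -EFinD.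
by rewrite lte_fin gtrDl pmulr_rlt0 // mulr_gt0.
Qed.

Lemma alpha_expectation_gt0 {X : T -> R} : Linfty P X -> (0 < 'E_P[X])%E ->
  (0 < alpha P U X)%E.
Proof.
move=> hX; rewrite (Linfty_expectation hX) lte_fin; set m := fine _ => m0.
have [M M0 XM] := Linfty_ae_bound hX.
set a := derive1 U 0; have a0 : 0 < a := derive1_U0_gt0 hU.
(* The linearisation error e g M is then half the first-order gain a g m. *)
pose e := a * m / (2 * M); have e0 : 0 < e by rewrite divr_gt0 ?mulr_gt0.
have [r r0 approx] := derivable1_approx (U_derivable hU 0) e0.
pose g := r / (2 * M); have g0 : 0 < g by rewrite divr_gt0 ?mulr_gt0.
apply: (@lt_le_trans _ _ g%:E); first by rewrite lte_fin.
apply: mu_le0_le_alpha => //; rewrite (mu_le0E hU hX g0).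
apply: (@le_trans _ _ 'E_P[fun w => (U 0 - e * g * M + (a * g) * X w)%R]%E).
  rewrite expectation_affine ?Linfty_Lfun1 // (Linfty_expectation hX) -EFinM -EFinD.
  rewrite lee_fin -addrA lerDl.
  have -> : e * g * M = g * (a * m) / 2 by rewrite /e; field; rewrite gt_eqF.
  by have := mulr_gt0 g0 (mulr_gt0 a0 m0); rewrite /m; lra.
apply: ae_le_expectation; [exact/Lfun1_affine/Linfty_Lfun1|exact: U_scale_Lfun1|].
apply: filterS XM => w XwM.
have gM : g * M = r / 2 by rewrite /g; field; rewrite gt_eqF.
have gXw : `|g * X w| <= r / 2 by rewrite normrM (gtr0_norm g0) -gM ler_pM2l.
have egXw : e * `|g * X w| <= e * g * M.
  rewrite -mulrA; apply: ler_wpM2l; first exact: ltW.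
  by rewrite normrM (gtr0_norm g0) ler_pM2l.
have := approx (g * X w); rewrite add0r ler_norml => /(_ _)/andP[|lo _].
  by apply: le_lt_trans gXw _; rewrite ltr_pdivrMr // ltr_pMr // ltr1n.
by rewrite -/a mulrA in lo *; lra.
Qed.

Lemma alpha_pinftyP {X : T -> R} : Linfty P X ->
  {ae P, forall w, 0 <= X w} <-> alpha P U X = +oo%E.
Proof.
move=> hX; split => [X0|alphaX].
  apply/eqP; rewrite eq_le leey /=; apply: alpha_ge => // g g0 _.
  rewrite (mu_le0E hU hX g0) -(expectation_cst P).
  apply: ae_le_expectation; [exact: Lfun_cst|exact: U_scale_Lfun1|].
  by apply: filterS X0 => w Xw0; rewrite (le_U hU) mulr_ge0 // ltW.
apply: contrapT => /(not_ae_ge0 hX.1)[c c0]; set A := [set w | _] => PA0.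
have mA : measurable A := measurable_fun_lt _ hX.1.
have [p PAp] : exists p : R, P A = p%:E.
  by exists (fine (P A)); rewrite fineK // fin_num_measure.
have p0 : 0 < p by rewrite -lte_fin -PAp.
have [B UB] := U_bounded_above hU.
(* [t] makes B + (U (- t) - B) p < U 0. *)
have [t t0 Ut] := U_unbounded_below hU (B + (U 0 - B) / p).
pose g := t / c; have g0 : 0 < g by rewrite divr_gt0.
have := lt_alpha_mu_le0 sar hX g0; rewrite alphaX ltry (mu_le0E hU hX g0) => /(_ isT).
apply/negP; rewrite -ltNge.
apply: (@le_lt_trans _ _ 'E_P[fun w => (B + (U (- t) - B) * (\1_A w : R))%R]%E).
  apply: ae_le_expectation; [exact: U_scale_Lfun1|exact/Lfun1_affine/Lfun1_indic|].
  apply: aeW => w; rewrite indicE; have [wA|_] := boolP (w \in A); last first.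
    by rewrite mulr0 addr0.
  have gct : g * c = t by rewrite /g divfK // gt_eqF.
  rewrite mulr1 addrCA subrr addr0 (le_U hU) -gct -mulrN ler_pM2l //.
  by move: wA; rewrite inE => /ltW.
rewrite expectation_affine ?Lfun1_indic // expectation_indic // PAp -EFinM -EFinD.
rewrite lte_fin -ltrBrDl -ltr_pdivlMr //; lra.
Qed.

Lemma alpha_fatou {X : T -> R} (Xn : nat -> T -> R) (x : \bar R) : Linfty P X ->
  (forall n, Linfty P (Xn n)) -> (0 <= x)%E -> (forall n, (x <= alpha P U (Xn n))%E) ->
  {ae P, forall w, (fun n => Xn n w) @ \oo --> X w} -> (x <= alpha P U X)%E.
Proof.
move=> hX hXn x0 xXn XnX; apply: alpha_ge => // g g0 gx.
rewrite (mu_le0E hU hX g0).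
apply: (U_expectation_fatou hU (fun n w => g * Xn n w)) => [n|||n].
- exact: LinftyZ.
- exact: LinftyZ.
- by apply: filterS XnX => w XnXw; apply: cvgM => //; exact: cvg_cst.
- apply/(mu_le0E hU (hXn n) g0)/(lt_alpha_mu_le0 sar (hXn n) g0).
  exact: lt_le_trans gx (xXn n).
Qed.

Lemma alphaZ {X : T -> R} (l : R) : Linfty P X -> 0 < l ->
  alpha P U (fun w => l * X w) = ((l^-1)%:E * alpha P U X)%E.
Proof.
move=> hX l0; have hlX := LinftyZ l hX.
have lX_mu_le0 (g : R) : 0 < g ->
    (mu P U g (fun w => (l * X w)%R) <= 0)%E <-> (mu P U (g * l) X <= 0)%E.
  move=> g0; rewrite (mu_le0E hU hlX g0) (mu_le0E hU hX (mulr_gt0 g0 l0)).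
  by under eq_fun do rewrite mulrA.
apply/le_anti/andP; split.
- rewrite lee_pdivlMl //; apply: alpha_ge.
    by rewrite mule_ge0 ?lee_fin ?(ltW l0) ?alpha_ge0.
  move=> g g0; rewrite -lte_pdivrMl // -EFinM => lt_g.
  have g'0 : 0 < l^-1 * g by rewrite mulr_gt0 ?invr_gt0.
  have := lt_alpha_mu_le0 sar hlX g'0 lt_g; rewrite lX_mu_le0 //.
  by rewrite mulrAC mulVf ?mul1r // gt_eqF.
- apply: alpha_ge; first by rewrite mule_ge0 ?lee_fin ?invr_ge0 ?(ltW l0) ?alpha_ge0.
  move=> g g0; rewrite lte_pdivlMl // -EFinM => lt_lg.
  apply/lX_mu_le0 => //; rewrite mulrC.
  exact: (lt_alpha_mu_le0 sar hX (mulr_gt0 l0 g0) lt_lg).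
Qed.

End properties.

Theorem proposition3p2 (d : measure_display) (T : measurableType d)
  (R : realType) (P : probability T R) (U : R -> R)
  (hU : utility_function U) (hsar : scale_aversion_regular P U) :
  forall X Y : T -> R, Linfty P X -> Linfty P Y ->
  (
   ({ae P, forall w, X w <= Y w} -> (alpha P U X <= alpha P U Y)%E) /\
   ({ae P, forall w, 0 <= X w} <-> alpha P U X = +oo%E) /\
   (forall l : R, 0 <= l -> l <= 1 ->
      (Order.min (alpha P U X) (alpha P U Y)
        <= alpha P U (fun w => (l * X w + (1 - l) * Y w)%R))%E) /\
   ((forall B : set R, measurable B -> P (X @^-1` B) = P (Y @^-1` B)) ->
      alpha P U X = alpha P U Y) /\
   ((('E_P[X] < 0)%E -> alpha P U X = 0%E) /\
    (('E_P[X] > 0)%E -> (alpha P U X > 0)%E)) /\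
   (forall (x : \bar R) (Xn : nat -> T -> R),
      (0 <= x)%E ->
      (forall n, Linfty P (Xn n)) ->
      (forall n, (x <= alpha P U (Xn n))%E) ->
      {ae P, forall w, (fun n => Xn n w) @ \oo --> X w} ->
      (x <= alpha P U X)%E) /\
   ((forall V : R -> R, nondecr V -> concave_fun V ->
       ('E_P[fun w => V (X w)] <= 'E_P[fun w => V (Y w)])%E) ->
      (alpha P U X <= alpha P U Y)%E) /\
   (forall l : R, 0 < l ->
      alpha P U (fun w => (l * X w)%R) = ((l^-1)%:E * alpha P U X)%E)).
Proof.
move=> X Y hX hY.
split; first exact: (alpha_ae_le hU hX hY).
split; first exact: (alpha_pinftyP hU hsar hX).
split; first by move=> l; exact: (alpha_quasiconcave hU hsar l hX hY).
split; first exact: (alpha_law hU hX hY).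
split.
  by split; [exact: (alpha_expectation_lt0 hU hX)|exact: (alpha_expectation_gt0 hU hX)].
split; first by move=> x Xn x0 hXn; exact: (alpha_fatou hU hsar Xn x hX hXn x0).
split; first exact: (alpha_ssd hU hX hY).
by move=> l; exact: (alphaZ hU hsar l hX).
Qed.
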